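(* Let $\Delta$ be a finite tree, $\mathbb{G}=\mathbb{G}(\Delta)$, $K\le\mathbb{G}$ a finite index subgroup and $w$ a vertex of $\widetilde{\Delta}^e$. Let $\pi:C_{\mathbb{G}}(w)\to F_{K,w}=C_{\mathbb{G}}(w)/\langle w\rangle$ be the quotient map. Then $\ker(\pi|_{C_K(w)})=Z(C_K(w))$, so $\pi$ induces an embedding $C_K(w)/Z(C_K(w))\hookrightarrow F_{K,w}$, and its image $P_{K,w}=\pi(C_K(w))$ is a finite index subgroup of $F_{K,w}$.
   Context: $\mathbb{G}(\Delta)$ is the right-angled Artin group with generators the vertices of $\Delta$ and relations $[u,v]=1$ for each edge. Conjugation: $g^h=hgh^{-1}$. The reduced extension graph $\widetilde{\Delta}^e$ has as vertices the elements of $\mathbb{G}$ conjugate to canonical generators corresponding to vertices of $\Delta$ of degree greater than 1, two vertices adjacent iff they commute. If $w=u^g$ with $u$ a vertex of degree $t\ge 2$ with neighbours $u_1,\dots,u_t$, then $C_{\mathbb{G}}(w)=\langle w\rangle\times F(u_1^g,\dots,u_t^g)$, with center $\langle w\rangle$, so $F_{K,w}=C_{\mathbb{G}}(w)/\langle w\rangle$ is free of rank $t$. $C_K(w)=K\cap C_{\mathbb{G}}(w)$ and $Z(\cdot)$ denotes the center. *)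

(* The right-angled Artin group G(Delta) is
   encoded by its standard presentation: elements are words in the letters
   v^{+1}, v^{-1} (v a vertex), and group equality is the congruence
   generated by free cancellation and the commutation relations of edges. *)
From mathcomp Require Import all_boot.
From mathcomp Require Import ssralg ssrint.
Set Implicit Arguments. Unset Strict Implicit. Unset Printing Implicit Defensive.

Definition simple_graph (V : finType) (e : rel V) : Prop :=
  symmetric e /\ irreflexive e.

(* A finite tree: nonempty, connected, and with exactly #|V| - 1 (undirected)
   edges, i.e. 2(#|V| - 1) ordered adjacent pairs. *)
Definition finite_tree (V : finType) (e : rel V) : Prop :=
  [/\ simple_graph e, 0 < #|V|,
      (forall x y : V, connect e x y) &
      #|[set p : V * V | e p.1 p.2]| = (#|V| - 1).*2].

Definition degree (V : finType) (e : rel V) (u : V) : nat := #|[set v | e u v]|.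

(* a letter (v, false) stands for v, (v, true) for v^{-1} *)
Definition word (V : Type) := seq (V * bool).

Definition inv_letter (V : Type) (x : V * bool) : V * bool := (x.1, ~~ x.2).

Definition winv (V : Type) (w : word V) : word V := rev (map (@inv_letter V) w).

Inductive raag_eq (V : finType) (e : rel V) : word V -> word V -> Prop :=
| raag_refl  : forall x, raag_eq e x x
| raag_sym   : forall x y, raag_eq e x y -> raag_eq e y x
| raag_trans : forall x y z, raag_eq e x y -> raag_eq e y z -> raag_eq e x z
| raag_cancel : forall (a b : word V) (l : V * bool),
    raag_eq e (a ++ l :: inv_letter l :: b) (a ++ b)
| raag_comm : forall (a b : word V) (u v : V) (su sv : bool), e u v ->
    raag_eq e (a ++ (u, su) :: (v, sv) :: b) (a ++ (v, sv) :: (u, su) :: b).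

Definition wpow (V : Type) (w : word V) (m : int) : word V :=
  match m with
  | Posz n => flatten (nseq n w)
  | Negz n => flatten (nseq n.+1 (winv w))
  end.

Definition is_subgroup (V : finType) (e : rel V) (K : word V -> Prop) : Prop :=
  [/\ (forall x y, raag_eq e x y -> K x -> K y),
      K [::],
      (forall x y, K x -> K y -> K (x ++ y)) &
      (forall x, K x -> K (winv x))].

Definition finite_index (V : finType) (e : rel V) (K : word V -> Prop) : Prop :=
  exists reps : seq (word V), forall x : word V,
    exists2 g, g \in reps & K (winv g ++ x).

(* w is a vertex of the reduced extension graph: a conjugate g u g^{-1}
   of a canonical generator u with degree u > 1 *)
Definition reduced_ext_vertex (V : finType) (e : rel V) (w : word V) : Prop :=
  exists (u : V) (g : word V),
    1 < degree e u /\ raag_eq e w (g ++ (u, false) :: winv g).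

Definition centG (V : finType) (e : rel V) (w x : word V) : Prop :=
  raag_eq e (x ++ w) (w ++ x).

Definition centK (V : finType) (e : rel V) (K : word V -> Prop) (w x : word V)
  : Prop := K x /\ centG e w x.

Definition center_centK (V : finType) (e : rel V) (K : word V -> Prop)
  (w x : word V) : Prop :=
  centK e K w x /\ forall y, centK e K w y -> raag_eq e (x ++ y) (y ++ x).

(* kernel of pi restricted to C_K(w), pi : C_G(w) -> C_G(w)/<w> *)
Definition ker_pi_CK (V : finType) (e : rel V) (K : word V -> Prop)
  (w x : word V) : Prop :=
  centK e K w x /\ exists m : int, raag_eq e x (wpow w m).

(* P_{K,w} = pi(C_K(w)) has finite index in F_{K,w} = C_G(w)/<w>:
   finitely many c_i in C_G(w) with C_G(w) = U_i c_i C_K(w) <w>. *)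
Definition image_finite_index (V : finType) (e : rel V) (K : word V -> Prop)
  (w : word V) : Prop :=
  exists reps : seq (word V),
    (forall c, c \in reps -> centG e w c) /\
    forall x, centG e w x ->
      exists2 c, c \in reps &
        exists (k : word V) (m : int),
          centK e K w k /\ raag_eq e x (c ++ k ++ wpow w m).

From mathcomp Require Import all_boot.
From mathcomp Require Import ssralg ssrint.
From Stdlib Require Import ClassicalEpsilon Classical.
Set Implicit Arguments. Unset Strict Implicit. Unset Printing Implicit Defensive.

(* The centralizer of a vertex [w = g u g^-1] of the reduced extension graph
   is [g (<u> x F(lk u)) g^-1]: a word commuting with [u] can be rewritten with
   letters in the star of [u] only, and in a tree the link [lk u] is an
   independent set, so it generates a free factor.  Words are compared through
   normal forms: reduced words that are equal in G(Delta) are trace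
   equivalent, i.e. have the same projections onto all pairs of non-adjacent
   vertices.
   An element [x] of Z(C_K(w)) commutes with [w] and, K having finite index,
   with some positive powers [g a_i^n_i g^-1] for two distinct neighbours
   [a_1, a_2] of [u].  Modulo [<w>], [x] lies in the free group on [lk u] and
   commutes with powers of two distinct free generators, hence is trivial.
   Conversely powers of [w] are central in C_K(w).  Finally, C_G(w) meets
   finitely many cosets of K, and one representative in C_G(w) per coset gives
   the finitely many cosets of C_K(w)<w>. *)

Lemma flatten_nseq1 (T : Type) (x : T) n : flatten (nseq n [:: x]) = nseq n x.
Proof. by elim: n => //= n ->. Qed.

Section WordGroup.
Variables (V : finType) (e : rel V).
Local Notation req := (raag_eq e).
Local Notation inv := (@inv_letter V).

Lemma inv_letterK : involutive inv.
Proof. by case=> a b; rewrite /inv_letter /= negbK. Qed.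

Lemma winv_cat (x y : word V) : winv (x ++ y) = winv y ++ winv x.
Proof. by rewrite /winv map_cat rev_cat. Qed.

Lemma winv_cons l (x : word V) : winv (l :: x) = winv x ++ [:: inv l].
Proof. by rewrite /winv /= rev_cons cats1. Qed.

Lemma winvK : involutive (@winv V).
Proof.
by move=> x; rewrite /winv map_rev revK -map_comp (eq_map inv_letterK) map_id.
Qed.

Lemma req_catl a x y : req x y -> req (a ++ x) (a ++ y).
Proof.
elim=> {x y} [x|x y _|x y z _ H1 _|a0 b l|a0 b u v su sv H].
- exact: raag_refl.
- exact: raag_sym.
- exact: raag_trans.
- by rewrite catA (catA a a0 b); apply: raag_cancel.
- by rewrite !catA; apply: raag_comm.
Qed.

Lemma req_catr b x y : req x y -> req (x ++ b) (y ++ b).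
Proof.
elim=> {x y} [x|x y _|x y z _ H1 _|a0 b0 l|a0 b0 u v su sv H].
- exact: raag_refl.
- exact: raag_sym.
- exact: raag_trans.
- by rewrite -!catA /=; apply: raag_cancel.
- by rewrite -!catA /=; apply: raag_comm.
Qed.

Lemma req_cat x x' y y' : req x x' -> req y y' -> req (x ++ y) (x' ++ y').
Proof. by move=> Hx Hy; apply: raag_trans (req_catr _ Hx) (req_catl _ Hy). Qed.

Lemma req_catV x : req (x ++ winv x) [::].
Proof.
elim: x => [|l x IH] /=; first exact: raag_refl.
have H : req ([:: l] ++ (x ++ winv x) ++ [:: inv l]) ([:: l] ++ [::] ++ [:: inv l]).
  by apply: req_catl; apply: req_catr.
rewrite winv_cons; rewrite /= -catA in H; apply: raag_trans H _.
exact: (raag_cancel e [::] [::] l).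
Qed.

Lemma req_Vcat x : req (winv x ++ x) [::].
Proof. by have := req_catV (winv x); rewrite winvK. Qed.

Lemma req_catK y z : req (winv y ++ y ++ z) z.
Proof. by rewrite catA; apply: (req_catr z (req_Vcat y)). Qed.

Lemma req_catKV y z : req (y ++ winv y ++ z) z.
Proof. by rewrite catA; apply: (req_catr z (req_catV y)). Qed.

Lemma req_catVr y z : req (z ++ y ++ winv y) z.
Proof. by rewrite -[X in req _ X]cats0; apply: req_catl; apply: req_catV. Qed.

Lemma req_winv x y : req x y -> req (winv x) (winv y).
Proof.
elim=> {x y} [x|x y _|x y z _ H1 _|a b l|a b u v su sv H].
- exact: raag_refl.
- exact: raag_sym.
- exact: raag_trans.
- rewrite !winv_cat !winv_cons -!catA /= inv_letterK; exact: raag_cancel.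
- rewrite !winv_cat !winv_cons -!catA /=; exact/raag_sym/raag_comm.
Qed.

Lemma req_catl_inj a x y : req (a ++ x) (a ++ y) -> req x y.
Proof.
move=> H; apply: raag_trans (raag_sym (req_catK a x)) _.
exact: raag_trans (req_catl (winv a) H) (req_catK a y).
Qed.

Definition comm (x y : word V) := req (x ++ y) (y ++ x).

Lemma comm_sym x y : comm x y -> comm y x.
Proof. exact: raag_sym. Qed.

Lemma comm_reql x x' y : req x x' -> comm x y -> comm x' y.
Proof.
move=> Hx H; apply: raag_trans (req_catr _ (raag_sym Hx)) _.
exact: raag_trans H (req_catl _ Hx).
Qed.

Lemma comm_reqr x y y' : req y y' -> comm x y -> comm x y'.
Proof. by move=> Hy /comm_sym H; apply/comm_sym/(comm_reql Hy). Qed.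

Lemma comm_nil x : comm x [::].
Proof. by rewrite /comm cats0; exact: raag_refl. Qed.

Lemma comm_cat x y z : comm x y -> comm x z -> comm x (y ++ z).
Proof.
move=> H1 H2; apply: raag_trans (_ : req (y ++ x ++ z) _).
  by rewrite catA (catA y); apply: req_catr.
by rewrite -catA; apply: req_catl.
Qed.

Lemma comm_catlK x y z : comm x z -> comm (x ++ y) z -> comm y z.
Proof.
move=> Hx Hxy; apply: (@req_catl_inj x); rewrite !catA.
by apply: raag_trans Hxy _; rewrite catA; apply: req_catr; apply: comm_sym.
Qed.

Lemma comm_winv x y : comm x y -> comm x (winv y).
Proof.
move=> H; apply: raag_trans (raag_sym (req_catK y _)) _.
have := req_catl (winv y) (req_catr (winv y) (raag_sym H)); rewrite -!catA => H'.
by apply: raag_trans H' _; rewrite catA; apply: req_catVr.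
Qed.

Lemma comm_flatten x y n : comm x y -> comm x (flatten (nseq n y)).
Proof. by move=> H; elim: n => [|n IH] /=; [exact: comm_nil | apply: comm_cat]. Qed.

Lemma comm_wpow x y m : comm x y -> comm x (wpow y m).
Proof. by move=> H; case: m => n; apply: comm_flatten => //; apply: comm_winv. Qed.

Lemma req_conj g a b : req a b -> req (g ++ a ++ winv g) (g ++ b ++ winv g).
Proof. by move=> H; apply: req_catl; apply: req_catr. Qed.

Lemma req_conj_cat g x y :
  req (g ++ (x ++ y) ++ winv g) ((g ++ x ++ winv g) ++ (g ++ y ++ winv g)).
Proof.
rewrite -!catA; apply: req_catl; apply: req_catl; apply: raag_sym.
exact: req_catK.
Qed.

Lemma comm_conj g x y : comm x y -> comm (g ++ x ++ winv g) (g ++ y ++ winv g).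
Proof.
move=> H; apply: raag_trans (raag_sym (req_conj_cat _ _ _)) _.
exact: raag_trans (req_conj g H) (req_conj_cat _ _ _).
Qed.

Lemma req_conjK g x : req (winv g ++ (g ++ x ++ winv g) ++ g) x.
Proof.
rewrite -!catA; apply: raag_trans (req_catK g _) _.
by rewrite -[X in req _ X]cats0; apply: req_catl; apply: req_Vcat.
Qed.

Lemma comm_conjV g x y : comm x (g ++ y ++ winv g) -> comm (winv g ++ x ++ g) y.
Proof.
move=> H; have := comm_conj (winv g) H; rewrite winvK.
exact: comm_reqr (req_conjK g y).
Qed.

Lemma flatten_nseq_conj g a n :
  req (flatten (nseq n (g ++ a ++ winv g))) (g ++ flatten (nseq n a) ++ winv g).
Proof.
elim: n => [|n IH] /=; first exact/raag_sym/req_catV.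
apply: raag_trans (req_catl _ IH) _.
by rewrite -!catA; apply: req_catl; apply: req_catl; apply: req_catK.
Qed.

Lemma flatten_nseq_req a b n :
  req a b -> req (flatten (nseq n a)) (flatten (nseq n b)).
Proof. by move=> H; elim: n => [|n IH] /=; [exact: raag_refl | apply: req_cat]. Qed.

Lemma wpow_req a b m : req a b -> req (wpow a m) (wpow b m).
Proof. by move=> H; case: m => n; apply: flatten_nseq_req => //; apply: req_winv. Qed.

Lemma wpow_conj g a m : req (wpow (g ++ a ++ winv g) m) (g ++ wpow a m ++ winv g).
Proof.
case: m => n; rewrite /wpow; first exact: flatten_nseq_conj.
by rewrite !winv_cat winvK -catA; apply: flatten_nseq_conj.
Qed.

Lemma wpow_consl w0 m : exists m', req (w0 ++ wpow w0 m) (wpow w0 m').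
Proof.
case: m => [n|[|n]]; first by exists (Posz n.+1); exact: raag_refl.
  by exists (Posz 0); rewrite /wpow /= cats0; exact: req_catV.
by exists (Negz n); exact: req_catKV.
Qed.

Lemma wpow_consl_inv w0 m : exists m', req (winv w0 ++ wpow w0 m) (wpow w0 m').
Proof.
case: m => [[|n]|n]; last by exists (Negz n.+1); exact: raag_refl.
  by exists (Negz 0); exact: raag_refl.
by exists (Posz n); exact: req_catK.
Qed.

Lemma letters_wpow u pu :
  all (fun l => l.1 == u) pu -> exists m, req pu (wpow [:: (u, false)] m).
Proof.
elim: pu => [|[v b] pu IH] /=; first by exists (Posz 0); exact: raag_refl.
case/andP => /eqP -> /IH [m Hm]; case: b.
  have [m' Hm'] := wpow_consl_inv [:: (u, false)] m.
  by exists m'; apply: raag_trans Hm'; exact: (req_catl [:: (u, true)] Hm).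
have [m' Hm'] := wpow_consl [:: (u, false)] m.
by exists m'; apply: raag_trans Hm'; exact: (req_catl [:: (u, false)] Hm).
Qed.

End WordGroup.

Section Traces.
Variables (V : finType) (e : rel V).
Hypothesis esym : symmetric e.
Hypothesis eirr : irreflexive e.
Local Notation req := (raag_eq e).

Definition pair_letter (a b : V) (l : V * bool) := (l.1 == a) || (l.1 == b).
Definition proj a b (s : word V) := filter (pair_letter a b) s.

(* Two words are trace equivalent when they have the same projections onto
   every pair of non-adjacent vertices (including the pairs [a, a]); these are
   the words obtained from each other by commuting adjacent letters. *)
Definition trace_eq (s t : word V) := forall a b, ~~ e a b -> proj a b s = proj a b t.

Lemma trace_eq_refl s : trace_eq s s. Proof. by []. Qed.

Lemma trace_eq_sym s t : trace_eq s t -> trace_eq t s.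
Proof. by move=> H a b h; rewrite H. Qed.

Lemma trace_eq_trans t s u : trace_eq s t -> trace_eq t u -> trace_eq s u.
Proof. by move=> H1 H2 a b h; rewrite H1 ?H2. Qed.

Lemma trace_eq_cat s s' t t' :
  trace_eq s s' -> trace_eq t t' -> trace_eq (s ++ t) (s' ++ t').
Proof. by move=> H1 H2 a b h; rewrite /proj !filter_cat -!/(proj a b _) H1 ?H2. Qed.

Lemma trace_eq_cons l s t : trace_eq s t -> trace_eq (l :: s) (l :: t).
Proof. exact: (@trace_eq_cat [:: l] [:: l]). Qed.

Lemma trace_eq_consK l s t : trace_eq (l :: s) (l :: t) -> trace_eq s t.
Proof. by move=> H a b h; have := H a b h; rewrite /proj /=; case: ifP => // _ [->]. Qed.

Lemma proj_winv a b s : proj a b (winv s) = winv (proj a b s).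
Proof. by rewrite /proj /winv filter_rev filter_map. Qed.

Lemma trace_eq_winv s t : trace_eq s t -> trace_eq (winv s) (winv t).
Proof. by move=> H a b h; rewrite !proj_winv H. Qed.

Lemma trace_eq_swap l m s : e l.1 m.1 -> trace_eq (l :: m :: s) (m :: l :: s).
Proof.
move=> H a b h; rewrite /proj /=.
case El: (pair_letter a b l); case Em: (pair_letter a b m) => //.
exfalso; move: El Em; rewrite /pair_letter.
case/orP => /eqP E1; case/orP => /eqP E2; move: H h; rewrite E1 E2 ?eirr //.
- by move=> ->.
- by rewrite esym => ->.
Qed.

Lemma size_count_letters (s : word V) :
  size s = \sum_(a : V) count (fun l => l.1 == a) s.
Proof.
elim: s => [|l s IH] /=; first by rewrite big1.
rewrite big_split /= -IH (bigD1 l.1) //= eqxx big1 ?addn0 // => b /negbTE.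
by rewrite eq_sym => ->.
Qed.

Lemma trace_eq_size s t : trace_eq s t -> size s = size t.
Proof.
move=> H; rewrite !size_count_letters; apply: eq_bigr => a _.
have := congr1 size (H a a (negbT (eirr a))); rewrite /proj !size_filter.
by rewrite /pair_letter !(eq_count (fun l => orbb _)).
Qed.

Lemma trace_eq_nil t : trace_eq [::] t -> t = [::].
Proof. by move/trace_eq_size => /= H; apply/size0nil; rewrite -H. Qed.

Lemma trace_eq_move l y1 y2 : all (fun m => e l.1 m.1) y1 ->
  trace_eq (y1 ++ l :: y2) (l :: y1 ++ y2).
Proof.
elim: y1 => [|m y1 IH] //= /andP [Hm Hall].
apply: trace_eq_trans (trace_eq_cons m (IH Hall)) _.
by apply: trace_eq_swap; rewrite esym.
Qed.

Lemma req_move l y1 y2 : all (fun m => e l.1 m.1) y1 ->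
  req (y1 ++ l :: y2) (l :: y1 ++ y2).
Proof.
case: l => u su; elim: y1 => [|[v sv] y1 IH] /=; first by move=> _; apply: raag_refl.
case/andP => Hm Hall; apply: raag_trans (req_catl [:: (v, sv)] (IH Hall)) _.
by apply: (raag_comm [::] (y1 ++ y2) sv su); rewrite esym.
Qed.

Lemma proj_nil a b s : ~~ has (pair_letter a b) s -> proj a b s = [::].
Proof. by move=> H; apply/eqP; move: H; rewrite has_filter negbK. Qed.

Lemma all_adj_of_trace_eq l x y1 y2 :
  ~~ has (fun m => m.1 == l.1) y1 -> trace_eq (l :: x) (y1 ++ l :: y2) ->
  all (fun m => e l.1 m.1) y1.
Proof.
move=> Hn H; apply/allP => m my1; apply/negPn/negP => hlm.
have := H l.1 m.1 hlm; rewrite /proj filter_cat /= {1}/pair_letter eqxx /=.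
have : m \in filter (pair_letter l.1 m.1) y1.
  by rewrite mem_filter my1 /pair_letter eqxx orbT.
case E: (filter _ y1) => [|z f] //= _ [Ez _]; subst z.
move/negP: Hn; apply; apply/hasP; exists l => //.
have : l \in filter (pair_letter l.1 m.1) y1 by rewrite E inE eqxx.
by rewrite mem_filter => /andP [].
Qed.

Lemma trace_eq_consE l x y : trace_eq (l :: x) y ->
  exists y1 y2, [/\ y = y1 ++ l :: y2, all (fun m => e l.1 m.1) y1
                  & trace_eq x (y1 ++ y2)].
Proof.
move=> H; have Hll := H l.1 l.1 (negbT (eirr _)).
have Hp : pair_letter l.1 l.1 =1 (fun m : V * bool => m.1 == l.1).
  by move=> m; rewrite /pair_letter /= orbb.
have Hhas : has (fun m : V * bool => m.1 == l.1) y.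
  apply/negPn/negP => Hn; move: Hll; rewrite [proj _ _ y]proj_nil ?(eq_has Hp) //.
  by rewrite /proj /= /pair_letter eqxx.
case: (split_find Hhas) H Hll => m y1 y2 /eqP Hm Hn H Hll.
rewrite cat_rcons /proj filter_cat -/(proj _ _ y1) proj_nil ?(eq_has Hp) //= in Hll.
rewrite /= /pair_letter eqxx Hm eqxx in Hll; case: Hll => Eml _; subst m.
rewrite cat_rcons in H *; have Hall := all_adj_of_trace_eq Hn H.
exists y1, y2; split => //.
apply: (@trace_eq_consK l); apply: trace_eq_trans H _; exact: trace_eq_move.
Qed.

Lemma trace_eq_heads x p q s t : trace_eq x (p :: s) -> trace_eq x (q :: t) -> p != q ->
  e q.1 p.1 /\ exists z, trace_eq s (q :: z) /\ trace_eq t (p :: z).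
Proof.
move=> H1 H2 Hpq.
have [[|p' y1] [y2 [/= E Hall Ht]]] := trace_eq_consE (trace_eq_trans (trace_eq_sym H2) H1).
  by case: E => E; rewrite E eqxx in Hpq.
case: E Hall Ht => <- -> /andP [Hqp Hall] Ht; split => //.
by exists (y1 ++ y2); split => //; apply: trace_eq_move.
Qed.

Lemma trace_eq_req s t : trace_eq s t -> req s t.
Proof.
elim: s t => [|l s IH] t H; first by rewrite (trace_eq_nil H); apply: raag_refl.
have [y1 [y2 [-> Hall Ht]]] := trace_eq_consE H.
apply: raag_trans (req_catl [:: l] (IH _ Ht)) _.
exact/raag_sym/req_move.
Qed.

End Traces.

Section NormalForm.
Variables (V : finType) (e : rel V).
Hypothesis esym : symmetric e.
Hypothesis eirr : irreflexive e.
Local Notation req := (raag_eq e).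
Local Notation inv := (@inv_letter V).
Local Notation trace_eq := (trace_eq e).

Definition reduced (x : word V) := forall a b l, ~ trace_eq x (a ++ l :: inv l :: b).

Lemma reduced_trace_eq x y : trace_eq x y -> reduced x -> reduced y.
Proof. by move=> H Hx a b l Hy; apply: (Hx a b l); apply: trace_eq_trans Hy. Qed.

Lemma reduced_catr a x : reduced (a ++ x) -> reduced x.
Proof.
move=> H a' b l Hx; apply: (H (a ++ a') b l); rewrite -catA.
exact: trace_eq_cat.
Qed.

Lemma reduced_catl a x : reduced (x ++ a) -> reduced x.
Proof.
move=> H a' b l Hx; apply: (H a' (b ++ a) l).
by have := trace_eq_cat Hx (trace_eq_refl a); rewrite -catA.
Qed.

Lemma reduced_nil : reduced [::].
Proof. by move=> a b l /(trace_eq_size eirr); rewrite size_cat /= addnS. Qed.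

Lemma reduced_winv x : reduced x -> reduced (winv x).
Proof.
move=> H a b l Hx; apply: (H (winv b) (winv a) l).
have := trace_eq_winv Hx; rewrite winvK => Hx'; apply: trace_eq_trans Hx' _.
by rewrite winv_cat !winv_cons -!catA /= inv_letterK.
Qed.

Lemma reduced_cons l x :
  reduced x -> (forall z, ~ trace_eq x (inv l :: z)) -> reduced (l :: x).
Proof.
move=> Hx Hz a; elim: a x Hx Hz => [|c a IH] x Hx Hz b k /= H.
  have [Elk|Hlk] := eqVneq l k; first by subst k; apply: (Hz b); apply: trace_eq_consK H.
  have [_ [z [H1 H2]]] := trace_eq_heads esym eirr (trace_eq_refl (l :: x)) H Hlk.
  have [E|Hkl] := eqVneq (inv k) l; first by apply: (Hz z); rewrite -E inv_letterK.
  have [_ [z' [H3 H4]]] := trace_eq_heads esym eirr (trace_eq_refl _) H2 Hkl.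
  by apply: (Hx [::] z' k); apply: trace_eq_trans H1 (trace_eq_cons _ H4).
have [Elc|Hlc] := eqVneq l c; first by subst c; apply: (Hx a b k); apply: trace_eq_consK H.
have [Hcl [z [H1 H2]]] := trace_eq_heads esym eirr (trace_eq_refl (l :: x)) H Hlc.
have Hzr : reduced z by apply: (@reduced_catr [:: c]); apply: reduced_trace_eq Hx.
apply: (IH z Hzr _ b k (trace_eq_sym H2)) => w Hw.
apply: (Hz (c :: w)); apply: trace_eq_trans H1 _.
apply: trace_eq_trans (trace_eq_cons c Hw) _; exact: trace_eq_swap.
Qed.

Lemma reduced_rcons l x :
  reduced x -> (forall z, ~ trace_eq x (z ++ [:: inv l])) -> reduced (x ++ [:: l]).
Proof.
move=> Hx Hz; rewrite -[x ++ _]winvK; apply: reduced_winv.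
rewrite winv_cat /= /winv /= -/(winv x).
apply: reduced_cons; first exact: reduced_winv.
move=> z Hw; apply: (Hz (winv z)).
have := trace_eq_winv Hw; rewrite winvK => H; apply: trace_eq_trans H _.
by rewrite winv_cons inv_letterK.
Qed.

Definition lmul (l : V * bool) (x : word V) : word V :=
  match excluded_middle_informative (exists z, trace_eq x (inv l :: z)) with
  | left H => proj1_sig (constructive_indefinite_description _ H)
  | right _ => l :: x
  end.

Lemma lmulP l x : trace_eq x (inv l :: lmul l x) \/
  ((forall z, ~ trace_eq x (inv l :: z)) /\ lmul l x = l :: x).
Proof.
rewrite /lmul; case: excluded_middle_informative => H.
  by left; exact: (proj2_sig (constructive_indefinite_description _ H)).
by right; split => // z Hz; apply: H; exists z.
Qed.

Lemma lmul_trace_eq l x y : trace_eq x y -> trace_eq (lmul l x) (lmul l y).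
Proof.
move=> H; case: (lmulP l x) => [Hx|[Hx ->]]; case: (lmulP l y) => [Hy|[Hy ->]].
- apply: (@trace_eq_consK _ _ (inv l)).
  exact: trace_eq_trans (trace_eq_sym Hx) (trace_eq_trans H Hy).
- by case: (Hy (lmul l x)); apply: trace_eq_trans (trace_eq_sym H) Hx.
- by case: (Hx (lmul l y)); apply: trace_eq_trans H Hy.
- exact: trace_eq_cons.
Qed.

Lemma lmul_req l x : req (lmul l x) (l :: x).
Proof.
case: (lmulP l x) => [Hx|[_ ->]]; last exact: raag_refl.
apply: raag_sym; apply: raag_trans (req_catl [:: l] (trace_eq_req esym eirr Hx)) _.
exact: (@raag_cancel V e [::] (lmul l x) l).
Qed.

Lemma lmul_reduced l x : reduced x -> reduced (lmul l x).
Proof.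
move=> Hx; case: (lmulP l x) => [H|[H ->]]; last exact: reduced_cons.
by apply: (@reduced_catr [:: inv l]); apply: reduced_trace_eq Hx.
Qed.

Lemma lmulK l x : reduced x -> trace_eq (lmul (inv l) (lmul l x)) x.
Proof.
move=> Hx; case: (lmulP l x) => [H|[H ->]].
  case: (lmulP (inv l) (lmul l x)) => [H2|[_ ->]]; last exact: trace_eq_sym.
  exfalso; apply: (Hx [::] (lmul (inv l) (lmul l x)) (inv l)).
  exact: trace_eq_trans H (trace_eq_cons _ H2).
case: (lmulP (inv l) (l :: x)) => [H2|[H2 _]].
  by rewrite inv_letterK in H2; apply: trace_eq_sym; apply: trace_eq_consK H2.
by case: (H2 x); rewrite inv_letterK.
Qed.

Lemma lmul_comm_cancel l m x : e l.1 m.1 ->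
  trace_eq x (inv m :: lmul m x) -> (forall z, ~ trace_eq x (inv l :: z)) ->
  trace_eq (lmul l (lmul m x)) (lmul m (lmul l x)).
Proof.
move=> Hlm Hm Hl; have Hswap := trace_eq_swap esym eirr.
case: (lmulP l (lmul m x)) => [H|[_ ->]].
  exfalso; apply: (Hl (inv m :: lmul l (lmul m x))).
  apply: trace_eq_trans Hm _; apply: trace_eq_trans (trace_eq_cons _ H) _.
  by apply: Hswap; rewrite /= esym.
case: (lmulP l x) => [H|[_ ->]]; first by case: (Hl _ H).
have Hlm' : trace_eq (l :: x) (inv m :: l :: lmul m x).
  by apply: trace_eq_trans (trace_eq_cons l Hm) _; apply: Hswap.
case: (lmulP m (l :: x)) => [H|[H _]]; last by case: (H _ Hlm').
by apply: trace_eq_sym; apply: (@trace_eq_consK _ _ (inv m));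
   apply: trace_eq_trans (trace_eq_sym H) Hlm'.
Qed.

Lemma inv_letter_adj_neq l m : e l.1 m.1 -> l != inv m.
Proof. by move=> Hlm; apply/eqP => E; move: Hlm; rewrite E eirr. Qed.

Lemma lmul_comm l m x : e l.1 m.1 -> trace_eq (lmul l (lmul m x)) (lmul m (lmul l x)).
Proof.
move=> Hlm; have Hml : e m.1 l.1 by rewrite esym.
case: (lmulP m x) => [Hm|[Hm Em]]; case: (lmulP l x) => [Hl|[Hl El]].
- have Hne : inv m != inv l := @inv_letter_adj_neq (inv m) l Hml.
  have [_ [z [H1 H2]]] := trace_eq_heads esym eirr Hm Hl Hne.
  case: (lmulP l (lmul m x)) => [H3|[H3 _]]; last by case: (H3 _ H1).
  case: (lmulP m (lmul l x)) => [H4|[H4 _]]; last by case: (H4 _ H2).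
  apply: (@trace_eq_trans _ _ z).
    by apply: (@trace_eq_consK _ _ (inv l)); apply: trace_eq_trans (trace_eq_sym H3) H1.
  apply: trace_eq_sym; apply: (@trace_eq_consK _ _ (inv m)).
  exact: trace_eq_trans (trace_eq_sym H4) H2.
- exact: lmul_comm_cancel.
- exact/trace_eq_sym/lmul_comm_cancel.
- rewrite Em El.
  case: (lmulP l (m :: x)) => [H|[_ ->]].
    have [_ [z [H1 _]]] := trace_eq_heads esym eirr (trace_eq_refl _) H (inv_letter_adj_neq Hml).
    by case: (Hl _ H1).
  case: (lmulP m (l :: x)) => [H|[_ ->]].
    have [_ [z [H1 _]]] := trace_eq_heads esym eirr (trace_eq_refl _) H (inv_letter_adj_neq Hlm).
    by case: (Hm _ H1).
  exact: trace_eq_swap.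
Qed.

Fixpoint nf (x : word V) : word V := if x is l :: x' then lmul l (nf x') else [::].

Lemma nf_reduced x : reduced (nf x).
Proof. by elim: x => [|l x IH] /=; [exact: reduced_nil | exact: lmul_reduced]. Qed.

Lemma nf_req x : req x (nf x).
Proof.
elim: x => [|l x IH] /=; first exact: raag_refl.
exact: raag_trans (req_catl [:: l] IH) (raag_sym (lmul_req l (nf x))).
Qed.

Lemma nf_catl a y y' : trace_eq (nf y) (nf y') -> trace_eq (nf (a ++ y)) (nf (a ++ y')).
Proof. by elim: a => [|l a IH] //= H; apply: lmul_trace_eq; apply: IH. Qed.

Lemma req_trace_eq_nf x y : req x y -> trace_eq (nf x) (nf y).
Proof.
elim=> {x y} [x|x y _|x y z _ H1 _|a b l|a b u v su sv H].
- exact: trace_eq_refl.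
- exact: trace_eq_sym.
- exact: trace_eq_trans.
- apply: nf_catl => /=.
  by have := lmulK (inv l) (@nf_reduced b); rewrite inv_letterK.
- exact/nf_catl/lmul_comm.
Qed.

Lemma nf_reduced_id x : reduced x -> trace_eq (nf x) x.
Proof.
elim: x => [|l x IH] //= Hx.
have Hx' : reduced x by apply: (@reduced_catr [:: l]).
apply: trace_eq_trans (lmul_trace_eq l (IH Hx')) _.
case: (lmulP l x) => [H|[_ ->]]; last exact: trace_eq_refl.
by exfalso; apply: (Hx [::] (lmul l x) l); apply: trace_eq_cons.
Qed.

Lemma reduced_req_trace_eq x y : reduced x -> reduced y -> req x y -> trace_eq x y.
Proof.
move=> Hx Hy H; apply: trace_eq_trans (trace_eq_sym (nf_reduced_id Hx)) _.
exact: trace_eq_trans (req_trace_eq_nf H) (nf_reduced_id Hy).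
Qed.

End NormalForm.

Section LetterCentralizer.
Variables (V : finType) (e : rel V).
Hypothesis esym : symmetric e.
Hypothesis eirr : irreflexive e.
Local Notation req := (raag_eq e).
Local Notation inv := (@inv_letter V).
Local Notation trace_eq := (trace_eq e).
Local Notation reduced := (reduced e).

Definition in_star (u : V) (l : V * bool) := (l.1 == u) || e u l.1.

Lemma comm_letter_cons l x : comm e [:: l] x -> comm e [:: l] (l :: x).
Proof. by move=> H; rewrite -[l :: x]cat1s; apply: comm_cat => //; apply: raag_refl. Qed.

Lemma comm_letter_rcons l x : comm e [:: l] x -> comm e [:: l] (x ++ [:: l]).
Proof. by move=> H; apply: comm_cat => //; apply: raag_refl. Qed.

Lemma reduced_comm_letter_star l x : reduced (l :: x) -> reduced (x ++ [:: l]) ->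
  comm e [:: l] x -> all (in_star l.1) x.
Proof.
move=> Hl Hr Hc; have HT := reduced_req_trace_eq esym eirr Hl Hr Hc.
apply/allP => m mx; apply/negPn/negP; rewrite negb_or => /andP [Hml Hem].
have := HT l.1 m.1 Hem; rewrite /proj filter_cat /= /pair_letter eqxx /=.
set s := filter _ x => Es.
have /allP /(_ m) : all (pred1 l) s.
  elim: s Es => [|b s IH] //= [Eb E]; subst b; rewrite eqxx /=; exact: IH.
rewrite mem_filter mx eqxx orbT => /(_ isT) /eqP Em.
by move: Hml; rewrite Em eqxx.
Qed.

(* Induction on the length: a reduced word commuting with [l] either starts or
   ends (up to commutation) with [inv l], which can be stripped, or neither
   [l :: x] nor [x ++ [:: l]] cancels. *)
Lemma reduced_cent_letter_star l n x : size x <= n -> reduced x ->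
  comm e [:: l] x -> exists y, req x y /\ all (in_star l.1) y.
Proof.
elim: n x => [|n IH] x Hsz Hx Hc.
  by move: Hsz; rewrite leqn0 => /nilP ->; exists [::]; split => //; exact: raag_refl.
case: (classic (exists x1, trace_eq x (inv l :: x1))) => [[x1 H1]|N1].
  have Hr := trace_eq_req esym eirr H1.
  have Hx1 : reduced x1 by apply: (@reduced_catr _ _ [:: inv l]); apply: reduced_trace_eq Hx.
  have Hsz1 : size x1 <= n by rewrite -ltnS -[(size x1).+1]/(size (inv l :: x1))
                                        -(trace_eq_size eirr H1).
  have E1 : req (l :: x) x1.
    apply: raag_trans (req_catl [:: l] Hr) _.
    exact: (@raag_cancel V e [::] x1 l).
  have [y1 [Hy1 Ha]] := IH x1 Hsz1 Hx1 (comm_reqr E1 (comm_letter_cons Hc)).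
  exists (inv l :: y1); split; first exact: raag_trans Hr (req_catl [:: inv l] Hy1).
  by rewrite /= /in_star eqxx.
case: (classic (exists x2, trace_eq x (x2 ++ [:: inv l]))) => [[x2 H2]|N2].
  have Hr := trace_eq_req esym eirr H2.
  have Hx2 : reduced x2 by apply: (@reduced_catl _ _ [:: inv l]); apply: reduced_trace_eq Hx.
  have Hsz2 : size x2 <= n
    by rewrite -ltnS -addn1 -(size_cat x2 [:: inv l]) -(trace_eq_size eirr H2).
  have E2 : req (x ++ [:: l]) x2.
    apply: raag_trans (req_catr [:: l] Hr) _.
    rewrite -catA /=; have := @raag_cancel V e x2 [::] (inv l).
    by rewrite inv_letterK cats0.
  have [y2 [Hy2 Ha]] := IH x2 Hsz2 Hx2 (comm_reqr E2 (comm_letter_rcons Hc)).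
  exists (y2 ++ [:: inv l]); split; first exact: raag_trans Hr (req_catr [:: inv l] Hy2).
  by rewrite all_cat Ha /= /in_star eqxx.
exists x; split; first exact: raag_refl.
apply: reduced_comm_letter_star Hc.
  by apply: reduced_cons => // z Hz; apply: N1; exists z.
by apply: reduced_rcons => // z Hz; apply: N2; exists z.
Qed.

Lemma cent_letter_star l x :
  comm e [:: l] x -> exists y, req x y /\ all (in_star l.1) y.
Proof.
move=> Hc; have Hnf := nf_req esym eirr x.
have [y [Hy Hst]] := reduced_cent_letter_star (leqnn _) (@nf_reduced _ _ esym eirr x)
                                               (comm_reqr Hnf Hc).
by exists y; split => //; apply: raag_trans Hnf Hy.
Qed.

Lemma star_split u y : all (in_star u) y ->
  exists pu f, [/\ req y (pu ++ f), all (fun l => l.1 == u) pu & all (fun l => e u l.1) f].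
Proof.
elim: y => [|l y IH] /=; first by exists [::], [::]; split => //; exact: raag_refl.
case/andP => /orP Hl /IH [pu [f [Hy Hpu Hf]]].
case: Hl => Hl.
  by exists (l :: pu), f; split; rewrite /= ?Hl //; exact: (req_catl [:: l] Hy).
exists pu, (l :: f); split; rewrite /= ?Hl //.
apply: raag_trans (req_catl [:: l] Hy) _; apply/raag_sym/req_move => //.
by apply/allP => m /(allP Hpu) /eqP ->; rewrite esym.
Qed.

Lemma comm_letters a b : all (fun l => all (fun m => e l.1 m.1) b) a -> comm e a b.
Proof.
move=> H; apply: comm_sym; elim: a H => [|l a IH] /=; first by move=> _; exact: comm_nil.
case/andP => Hl Ha; rewrite -cat1s; apply: comm_cat; last exact: IH.
by have := @req_move _ _ esym l b [::] Hl; rewrite cats0.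
Qed.

End LetterCentralizer.

Definition edgeless (V : finType) : rel V := fun _ _ => false.

Section IndependentFilter.
Variables (V : finType) (e : rel V).
Local Notation req := (raag_eq e).

(* Deleting the letters outside an independent set [P] is a morphism onto the
   free group on [P]. *)
Lemma req_filter_indep (P : pred V) x y : (forall a b, P a -> P b -> ~~ e a b) ->
  req x y -> raag_eq (@edgeless V) (filter (fun l => P l.1) x) (filter (fun l => P l.1) y).
Proof.
move=> HP; elim=> {x y} [x|x y _|x y z _ H1 _|a b l|a b u v su sv H].
- exact: raag_refl.
- exact: raag_sym.
- exact: raag_trans.
- by rewrite !filter_cat /=; case: (P l.1); [exact: raag_cancel | exact: raag_refl].
- rewrite !filter_cat /=; case Hu: (P u); case Hv: (P v) => //; try exact: raag_refl.
  by move: (HP u v Hu Hv); rewrite H.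
Qed.

Lemma req_of_edgeless x y : raag_eq (@edgeless V) x y -> req x y.
Proof.
elim=> {x y} [x|x y _|x y z _ H1 _|a b l|//].
- exact: raag_refl.
- exact: raag_sym.
- exact: raag_trans.
- exact: raag_cancel.
Qed.

End IndependentFilter.

Section FreeGroup.
Variable V : finType.
Local Notation e0 := (@edgeless V).
Local Notation req0 := (raag_eq e0).
Local Notation inv := (@inv_letter V).

Lemma edgeless_sym : symmetric e0. Proof. by []. Qed.
Lemma edgeless_irr : irreflexive e0. Proof. by []. Qed.

Lemma trace_eq_edgeless s t : trace_eq e0 s t -> s = t.
Proof.
elim: s t => [|l s IH] t H; first by rewrite (trace_eq_nil edgeless_irr H).
have [[|m y1] [y2 [-> Hall Ht]]] := trace_eq_consE edgeless_sym edgeless_irr H => //.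
by rewrite (IH _ Ht).
Qed.

Lemma reduced_edgeless_cons l x :
  reduced e0 x -> (forall z, x <> inv l :: z) -> reduced e0 (l :: x).
Proof.
move=> Hx Hz; apply: (reduced_cons edgeless_sym edgeless_irr) => // z.
by move/trace_eq_edgeless; exact: Hz.
Qed.

Lemma reduced_edgeless_rcons l x :
  reduced e0 x -> (forall z, x <> z ++ [:: inv l]) -> reduced e0 (x ++ [:: l]).
Proof.
move=> Hx Hz; apply: (reduced_rcons edgeless_sym edgeless_irr) => // z.
by move/trace_eq_edgeless; exact: Hz.
Qed.

Lemma comm_nseq_letter v b N : comm e0 (nseq N (v, false)) [:: (v, b)].
Proof.
have H : comm e0 (nseq N (v, false)) [:: (v, false)].
  by apply: comm_sym; rewrite /comm -(nseqD N 1) addn1; exact: raag_refl.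
by case: b => //; exact: (comm_winv H).
Qed.

(* If [f] neither starts nor ends with a [v]-letter, then [v^N f] and [f v^N]
   are distinct reduced words, so they cannot be equal in the free group. *)
Lemma reduced_comm_nseq_ends v N l0 f' f'' lz : 0 < N ->
  reduced e0 (l0 :: f') -> l0 :: f' = f'' ++ [:: lz] ->
  comm e0 (nseq N (v, false)) (l0 :: f') -> l0.1 != v -> lz.1 != v -> False.
Proof.
set f := l0 :: f' => HN Hf Ef Hc H0 Hz.
have HA k : reduced e0 (nseq k (v, false) ++ f).
  elim: k => [|k IH] //=; apply: reduced_edgeless_cons => // z.
  by case: k {IH} => [|k] [E _] //; move: H0; rewrite E eqxx.
have nseqSr k : nseq k.+1 (v, false) = nseq k (v, false) ++ [:: (v, false)].
  by rewrite -addn1 nseqD.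
have HB k : reduced e0 (f ++ nseq k (v, false)).
  elim: k => [|k IH]; first by rewrite cats0.
  rewrite nseqSr catA; apply: reduced_edgeless_rcons => // z /eqP.
  case: k {IH} => [|k]; first rewrite cats0 Ef.
    by rewrite !cats1 eqseq_rcons => /andP [_ /eqP E]; move: Hz; rewrite E eqxx.
  by rewrite nseqSr catA !cats1 eqseq_rcons => /andP [_ /eqP []].
have := reduced_req_trace_eq edgeless_sym edgeless_irr (HA N) (HB N) Hc.
move/trace_eq_edgeless; case: N HN {HA HB Hc} => [|N] // _ [E _].
by move: H0; rewrite -E eqxx.
Qed.

Lemma comm_nseq_consK v N l f : l.1 == v ->
  comm e0 (nseq N (v, false)) (l :: f) -> comm e0 (nseq N (v, false)) f.
Proof.
move=> Hl Hc; have E : req0 ([:: inv l] ++ l :: f) f.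
  by have := @raag_cancel V e0 [::] f (inv l); rewrite inv_letterK.
apply: comm_reqr E _; apply: comm_cat => //.
by case: l Hl {Hc} => w b /= /eqP ->; exact: comm_nseq_letter.
Qed.

Lemma comm_nseq_rconsK v N l f : l.1 == v ->
  comm e0 (nseq N (v, false)) (f ++ [:: l]) -> comm e0 (nseq N (v, false)) f.
Proof.
move=> Hl Hc; have E : req0 ((f ++ [:: l]) ++ [:: inv l]) f.
  by rewrite -catA; have := @raag_cancel V e0 f [::] l; rewrite cats0.
apply: comm_reqr E _; apply: comm_cat => //.
by case: l Hl {Hc} => w b /= /eqP ->; exact: comm_nseq_letter.
Qed.

Lemma reduced_comm_nseq_letters v N n f : 0 < N -> size f <= n -> reduced e0 f ->
  comm e0 (nseq N (v, false)) f -> all (fun l => l.1 == v) f.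
Proof.
move=> HN; elim: n f => [|n IH] [|l0 f'] // Hsz Hf Hc.
have [H0|H0] := boolP (l0.1 == v).
  rewrite /= H0; apply: IH => //; first exact: (@reduced_catr _ _ [:: l0]).
  exact: comm_nseq_consK Hc.
case/lastP: f' Hsz Hf Hc => [|f1 lz] Hsz Hf Hc.
  by case: (reduced_comm_nseq_ends (f'' := [::]) HN Hf erefl Hc H0 H0).
have Ef : l0 :: rcons f1 lz = (l0 :: f1) ++ [:: lz] by rewrite -cats1.
have [Hzv|Hzv] := boolP (lz.1 == v); last first.
  by case: (reduced_comm_nseq_ends HN Hf Ef Hc H0 Hzv).
rewrite Ef all_cat; rewrite Ef in Hsz Hf Hc.
apply/andP; split; last by rewrite /= Hzv.
apply: IH; first by move: Hsz; rewrite size_cat addn1.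
  exact: (@reduced_catl _ _ [:: lz]).
exact: comm_nseq_rconsK Hc.
Qed.

Lemma free_comm_nseq_letters v N f : 0 < N ->
  comm e0 (nseq N (v, false)) f -> all (fun l => l.1 == v) (nf e0 f).
Proof.
move=> HN Hc; apply: (reduced_comm_nseq_letters HN (leqnn _)).
  exact: nf_reduced edgeless_sym edgeless_irr _.
exact: comm_reqr (nf_req edgeless_sym edgeless_irr f) Hc.
Qed.

End FreeGroup.

Section TreeLink.
Variables (V : finType) (e : rel V) (r : V).
Hypothesis esym : symmetric e.
Hypothesis eirr : irreflexive e.
Hypothesis conn : forall x y, connect e x y.

Fixpoint ball k : {set V} :=
  if k is k'.+1 then ball k' :|: [set y | [exists x in ball k', e x y]] else [set r].

Lemma ball_path p x k : path e x p -> x \in ball k -> last x p \in ball (k + size p).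
Proof.
elim: p x k => [|y p IH] x k /=; first by rewrite addn0.
case/andP => Hxy Hp Hx; rewrite addnS -addSn; apply: IH => //=.
by rewrite in_setU; apply/orP; right; rewrite inE; apply/existsP; exists x; rewrite Hx.
Qed.

Lemma in_some_ball v : exists k, v \in ball k.
Proof.
have /connectP [p Hp ->] := conn r v.
by exists (0 + size p); apply: ball_path => //=; rewrite inE.
Qed.

Definition dist v := ex_minn (in_some_ball v).

Lemma dist_ball v : v \in ball (dist v).
Proof. by rewrite /dist; case: ex_minnP. Qed.

Lemma dist_min v k : v \in ball k -> dist v <= k.
Proof. by rewrite /dist; case: ex_minnP => m _ H /H. Qed.

Definition parent v := odflt r [pick x | (x \in ball (dist v).-1) && e x v].

Lemma parentP v : v != r -> e (parent v) v /\ dist (parent v) < dist v.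
Proof.
move=> Hv; have Hd := dist_ball v.
case Edv: (dist v) Hd => [|k] /= Hd.
  by move: Hd; rewrite inE => /eqP E; rewrite E eqxx in Hv.
have Hnk : v \notin ball k by apply/negP => /dist_min; rewrite Edv ltnn.
move: Hd; rewrite in_setU (negbTE Hnk) /= inE => /existsP [x /andP [Hx Hxv]].
rewrite /parent Edv /=; case: pickP => [y /andP [Hy Hyv]|H]; last first.
  by move: (H x); rewrite Hx Hxv.
by split => //; apply: leq_ltn_trans (dist_min Hy) _.
Qed.

Lemma parent_nbr a : e r a -> parent a = r.
Proof.
move=> Ha; have Har : a != r by apply/eqP => E; move: Ha; rewrite E eirr.
have Hd : dist a <= 1.
  by apply: dist_min => /=; rewrite !inE; apply/orP; right; apply/existsP; exists r;
     rewrite !inE eqxx.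
have [_ Hlt] := parentP Har.
have E0 : dist (parent a) = 0.
  by move: Hlt Hd; case: (dist (parent a)) => // n; case: (dist a) => [|[]].
by have := dist_ball (parent a); rewrite E0 inE => /eqP.
Qed.

Lemma parent_edges_disjoint :
  [set (v, parent v) | v in [set~ r]] :&: [set (parent v, v) | v in [set~ r]] = set0.
Proof.
apply/eqP; rewrite -subset0; apply/subsetP => p; rewrite inE.
case/andP => /imsetP [v Hv ->] /imsetP [w Hw [E1 E2]].
rewrite !in_setC1 in Hv Hw; have [_ L1] := parentP Hv; have [_ L2] := parentP Hw.
by move: L1 L2; rewrite -E1 E2 => L1 L2; have := ltn_trans L1 L2; rewrite ltnn.
Qed.

(* The 2(|V| - 1) oriented edges between each vertex and its parent are all
   the oriented edges of the tree; an edge between two neighbours of the root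
   would be one more. *)
Lemma tree_nbrs_nonadj a b : #|[set p : V * V | e p.1 p.2]| = (#|V| - 1).*2 ->
  e r a -> e r b -> ~~ e a b.
Proof.
move=> Hcard Ha Hb; apply/negP => Heab.
set S1 := [set (v, parent v) | v in [set~ r]].
set S2 := [set (parent v, v) | v in [set~ r]].
have C1 : #|S1| = #|V|.-1 by rewrite card_in_imset ?cardsC1 // => x y _ _ [].
have C2 : #|S2| = #|V|.-1 by rewrite card_in_imset ?cardsC1 // => x y _ _ [].
have Hnot : (a, b) \notin S1 :|: S2.
  rewrite in_setU; apply/norP; split; apply/negP => /imsetP [v Hv [E1 E2]].
    by move: Hb; rewrite E2 -E1 parent_nbr // eirr.
  by move: Ha; rewrite E1 -E2 parent_nbr // eirr.
have Hsub : (a, b) |: (S1 :|: S2) \subset [set p : V * V | e p.1 p.2].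
  apply/subsetP => p; rewrite !inE => /orP [/eqP -> //|/orP [] /imsetP [v Hv ->]] /=;
  rewrite in_setC1 in Hv; have [H _] := parentP Hv => //.
  by rewrite esym.
have := subset_leq_card Hsub.
rewrite cardsU1 Hnot cardsU parent_edges_disjoint cards0 subn0 C1 C2 Hcard.
by rewrite subn1 -addnn add1n ltnn.
Qed.

End TreeLink.

Section GeneratorCentralizer.
Variables (V : finType) (e : rel V) (u : V).
Hypothesis esym : symmetric e.
Hypothesis eirr : irreflexive e.
Hypothesis link_indep : forall a b, e u a -> e u b -> ~~ e a b.
Local Notation req := (raag_eq e).
Local Notation U := [:: (u, false)].

Lemma cent_generator_decomp x : comm e U x ->
  exists m f, req x (wpow U m ++ f) /\ all (fun l => e u l.1) f.
Proof.
case/(cent_letter_star esym eirr) => y [Hy /(star_split esym) [pu [f [Hpf Hpu Hf]]]].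
have [m Hm] := letters_wpow e Hpu.
by exists m, f; split => //; apply: raag_trans Hy (raag_trans Hpf (req_catr f Hm)).
Qed.

Lemma link_comm_nseq_letters m f a n : e u a -> 0 < n ->
  all (fun l => e u l.1) f -> comm e (wpow U m ++ f) (nseq n (a, false)) ->
  all (fun l => l.1 == a) (nf (@edgeless V) f).
Proof.
move=> Ha Hn Hf Hc.
have HUa : comm e (wpow U m) (nseq n (a, false)).
  apply: comm_sym; apply: comm_wpow; apply: (comm_letters esym).
  by apply/allP => k; rewrite mem_nseq => /andP [_ /eqP ->] /=; rewrite andbT esym.
have Hfa := comm_catlK HUa Hc.
have Hall : all (fun l => e u l.1) (nseq n (a, false)) by rewrite all_nseq Ha orbT.
have := req_filter_indep (P := fun v => e u v) link_indep Hfa.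
rewrite !filter_cat (all_filterP Hf) (all_filterP Hall) => Hfa0.
exact/(free_comm_nseq_letters Hn)/comm_sym.
Qed.

(* The link of [u] being independent, the centralizer of [u] is [<u> x F(link)];
   in the free factor, commuting with powers of two distinct free generators
   forces triviality. *)
Lemma cent_generator_link_pows x a1 a2 n1 n2 :
  e u a1 -> e u a2 -> a1 != a2 -> 0 < n1 -> 0 < n2 ->
  comm e x U -> comm e x (nseq n1 (a1, false)) -> comm e x (nseq n2 (a2, false)) ->
  exists m, req x (wpow U m).
Proof.
move=> Ha1 Ha2 Ha12 Hn1 Hn2 /comm_sym /cent_generator_decomp [m [f [Hx Hf]]] H1 H2.
have F1 := link_comm_nseq_letters Ha1 Hn1 Hf (comm_reql Hx H1).
have F2 := link_comm_nseq_letters Ha2 Hn2 Hf (comm_reql Hx H2).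
have Hf0 : nf (@edgeless V) f = [::].
  move: F1 F2; case: (nf _ f) => [|l f0] //= /andP [/eqP E1 _] /andP [/eqP E2 _].
  by move: Ha12; rewrite -E1 -E2 eqxx.
have Hf1 : req f [::].
  by apply: req_of_edgeless; have := nf_req (@edgeless_sym V) (@edgeless_irr V) f; rewrite Hf0.
by exists m; apply: raag_trans Hx _; rewrite -[X in req _ X]cats0; apply: req_catl.
Qed.

Lemma cent_conj_generator_link_pows g x a1 a2 n1 n2 :
  e u a1 -> e u a2 -> a1 != a2 -> 0 < n1 -> 0 < n2 ->
  comm e x (g ++ U ++ winv g) ->
  comm e x (g ++ nseq n1 (a1, false) ++ winv g) ->
  comm e x (g ++ nseq n2 (a2, false) ++ winv g) ->
  exists m, req x (g ++ wpow U m ++ winv g).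
Proof.
move=> Ha1 Ha2 Ha12 Hn1 Hn2 /comm_conjV Hu /comm_conjV H1 /comm_conjV H2.
have [m Hm] := cent_generator_link_pows Ha1 Ha2 Ha12 Hn1 Hn2 Hu H1 H2.
exists m; have := req_conjK e (winv g) x; rewrite winvK => Hx.
exact: raag_trans (raag_sym Hx) (req_conj g Hm).
Qed.

End GeneratorCentralizer.

Section FiniteIndex.
Variables (V : finType) (e : rel V) (K : word V -> Prop).
Hypothesis K_subgroup : is_subgroup e K.
Hypothesis K_finite_index : finite_index e K.

(* Pigeonhole: two of the powers [y^0, ..., y^#reps] lie in the same coset. *)
Lemma finite_index_pow_mem y : exists2 n, 0 < n & K (flatten (nseq n y)).
Proof.
case: K_subgroup => Kreq _ Kmul Kinv; case: K_finite_index => reps Hreps.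
have Hch k : exists g, g \in reps /\ K (winv g ++ flatten (nseq k y)).
  by case: (Hreps (flatten (nseq k y))) => g H1 H2; exists g.
pose F k := proj1_sig (constructive_indefinite_description _ (Hch k)).
have HF k : F k \in reps /\ K (winv (F k) ++ flatten (nseq k y)).
  exact: (proj2_sig (constructive_indefinite_description _ (Hch k))).
set s := map F (iota 0 (size reps).+1).
have Hs : size s = (size reps).+1 by rewrite size_map size_iota.
have : ~~ uniq s.
  apply/negP => /uniq_leq_size Hle.
  have Hsub : {subset s <= reps} by move=> z /mapP [k _ ->]; case: (HF k).
  by move: (Hle reps Hsub); rewrite Hs ltnn.
case/(uniqPn [::]) => i [j [Hij Hj]]; have Hi := ltn_trans Hij Hj.
rewrite Hs in Hi Hj; rewrite !(nth_map 0) ?size_iota // !nth_iota // !add0n => Eij.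
case: (HF i) => _ Ki; case: (HF j) => _; rewrite -Eij => Kj.
exists (j - i); first by rewrite subn_gt0.
apply: Kreq (Kmul _ _ (Kinv _ Ki) Kj).
have -> : flatten (nseq j y) = flatten (nseq i y) ++ flatten (nseq (j - i) y).
  by rewrite -flatten_cat -nseqD subnKC // ltnW.
rewrite winv_cat winvK -catA.
exact: raag_trans (req_catl _ (req_catKV e _ _)) (req_catK e _ _).
Qed.

Lemma image_finite_index_of_finite_index w : image_finite_index e K w.
Proof.
case: K_subgroup => Kreq _ Kmul Kinv; case: K_finite_index => reps Hreps.
pose meets g c := centG e w c /\ K (winv g ++ c).
have [rs' [H1 H2]] : exists rs : seq (word V), (forall c, c \in rs -> centG e w c) /\
    forall g, g \in reps -> (exists c, meets g c) -> exists2 c, c \in rs & meets g c.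
  elim: reps {Hreps} => [|g rs [rs' [H1 H2]]]; first by exists [::].
  case: (classic (exists c, meets g c)) => [[c [Hc Kc]]|N].
    exists (c :: rs'); split => [c'|g'].
      by rewrite inE => /orP [/eqP ->|/H1].
    rewrite inE => /orP [/eqP -> _|Hg' /(H2 g' Hg') [c' Hc' Hc'']].
      by exists c; rewrite ?inE ?eqxx.
    by exists c' => //; rewrite inE Hc' orbT.
  exists rs'; split => // g'; rewrite inE => /orP [/eqP -> Hex|]; last exact: H2.
  by case: N.
exists rs'; split => // x Hx.
case: (Hreps x) => g Hg Kg.
case: (H2 g Hg) => [|c Hc [Hcw Kc]]; first by exists x.
exists c => //; exists (winv c ++ x), (Posz 0); split; first split.
- apply: Kreq (Kmul _ _ (Kinv _ Kc) Kg).
  by rewrite winv_cat winvK -catA; apply: req_catl; exact: req_catKV.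
- by apply: comm_sym; apply: comm_cat; [apply/comm_winv/comm_sym | apply: comm_sym].
- by rewrite /wpow /= cats0; apply: raag_sym; exact: req_catKV.
Qed.

End FiniteIndex.

Lemma ker_pi_CK_center (V : finType) (e : rel V) (K : word V -> Prop) (w x : word V) :
  ker_pi_CK e K w x -> center_centK e K w x.
Proof.
case=> [Hx [m Hm]]; split => // y [_ Hy].
exact/comm_sym/(comm_reqr (raag_sym Hm))/comm_wpow.
Qed.

Lemma conj_nbr_pow_centK (V : finType) (e : rel V) (K : word V -> Prop) u g a w :
  is_subgroup e K -> finite_index e K -> e u a ->
  raag_eq e w (g ++ (u, false) :: winv g) ->
  exists2 n, 0 < n & centK e K w (g ++ nseq n (a, false) ++ winv g).
Proof.
move=> HK Hfi Ha Hw; set Y := g ++ [:: (a, false)] ++ winv g.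
have [n Hn KY] := finite_index_pow_mem HK Hfi Y.
have HY : raag_eq e (flatten (nseq n Y)) (g ++ nseq n (a, false) ++ winv g).
  by have := flatten_nseq_conj e g [:: (a, false)] n; rewrite flatten_nseq1.
exists n => //; split; first by case: HK => Kreq _ _ _; exact: Kreq KY.
apply: comm_sym; apply: comm_reqr HY _; apply: comm_flatten.
apply: comm_reql (raag_sym Hw) _; apply: (@comm_conj _ _ g [:: (u, false)]).
exact: (@raag_comm V e [::] [::] _ _ false false Ha).
Qed.

Lemma center_centK_ker_pi (V : finType) (e : rel V) (K : word V -> Prop) u g w x :
  symmetric e -> irreflexive e -> (forall a b, e u a -> e u b -> ~~ e a b) ->
  1 < degree e u -> is_subgroup e K -> finite_index e K ->
  raag_eq e w (g ++ (u, false) :: winv g) ->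
  center_centK e K w x -> ker_pi_CK e K w x.
Proof.
move=> esym eirr Hlink Hdeg HK Hfi Hw [[Kx Hx] Hc]; split => //.
have [a1 [a2 [Ha1 Ha2 Ha12]]] := card_gt1P Hdeg; rewrite !inE in Ha1 Ha2.
have [n1 Hn1 /Hc H1] := conj_nbr_pow_centK HK Hfi Ha1 Hw.
have [n2 Hn2 /Hc H2] := conj_nbr_pow_centK HK Hfi Ha2 Hw.
have [m Hm] := cent_conj_generator_link_pows esym eirr Hlink Ha1 Ha2 Ha12 Hn1 Hn2
                 (comm_reqr Hw Hx) H1 H2.
exists m; apply: raag_trans Hm (raag_sym (raag_trans (wpow_req m Hw) _)).
exact: (wpow_conj e g [:: (u, false)]).
Qed.

Theorem mainTheorem12 (V : finType) (e : rel V) (K : word V -> Prop) (w : word V) :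
  finite_tree e ->
  is_subgroup e K -> finite_index e K ->
  reduced_ext_vertex e w ->
  (forall x, ker_pi_CK e K w x <-> center_centK e K w x) /\
  image_finite_index e K w.
Proof.
move=> [[esym eirr] _ conn Hcard] HK Hfi [u [g [Hdeg Hw]]].
split=> [x|]; last exact: image_finite_index_of_finite_index.
split; first exact: ker_pi_CK_center.
apply: (center_centK_ker_pi esym eirr _ Hdeg HK Hfi Hw) => a b.
exact: (@tree_nbrs_nonadj V e u esym eirr conn a b Hcard).
Qed.
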